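(* Let the Timehash scheme be as described in the context, with hierarchy $m_1 > m_2 > \dots > m_k$. Let a document have operating hours given by integers $0 \le s < e \le 1440$, i.e. it is open at the minutes $t$ with $s \le t < e$, and let $H(s,e)$ be its set of index keys. Then for every minute $t$ with $s \le t < e$, the query key set $Q(t)$ satisfies $Q(t) \cap H(s,e) \neq \emptyset$; that is, the document is retrieved by the point query at $t$ (zero false negatives).
   Context: Time of day is measured in minutes since midnight, $\{0,1,\dots,1439\}$. A hierarchy of measures is a sequence of positive integers $m_1 > m_2 > \dots > m_k$ with $m_k = 1$, $m_i$ dividing $m_{i-1}$ for $2 \le i \le k$, and $m_1$ dividing $1440$ (e.g. $(240,60,15,5,1)$). A level-$i$ block is a set of minutes $[a, a+m_i) = \{a, a+1, \dots, a+m_i-1\}$ with $a$ a nonnegative multiple of $m_i$ and $a + m_i \le 1440$; its key is the pair $(i,a)$. Every level-$i$ block with $i \ge 2$ is contained in a unique level-$(i-1)$ block, its parent. For a range $0 \le s < e \le 1440$ (the minutes $s,\dots,e-1$), the index key set $H(s,e)$ is the set of keys of all blocks $B$ (at any level) such that $B \subseteq [s,e)$ and either $B$ is at level 1 or the parent of $B$ is not contained in $[s,e)$ (this is the hierarchical decomposition obtained by taking the complete coarsest blocks inside the range and recursively refining the partially covered boundary blocks at finer levels). For a query minute $t$, the query key set $Q(t)$ consists of the keys of the $k$ blocks, one at each level $i=1,\dots,k$, that contain $t$. A document is retrieved by the point query at $t$ iff some query key in $Q(t)$ equals some index key of the document. *)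

From mathcomp Require Import all_boot.
Set Implicit Arguments. Unset Strict Implicit. Unset Printing Implicit Defensive.

Definition day_len : nat := 1440.

(* A hierarchy of measures m_1 > ... > m_k is the list ms = [:: m_1; ...; m_k].
   Levels are 1-indexed: the measure of level i is nth 0 ms i.-1. *)
Definition meas (ms : seq nat) (i : nat) : nat := nth 0 ms i.-1.

Definition hierarchy (ms : seq nat) : Prop :=
  [/\ 0 < size ms /\ (forall i, 1 <= i <= size ms -> 0 < meas ms i),
      forall i, 2 <= i <= size ms -> meas ms i < meas ms i.-1,
      forall i, 2 <= i <= size ms -> meas ms i %| meas ms i.-1,
      meas ms (size ms) = 1
    & meas ms 1 %| day_len].

(* A key is a pair (i, a): level i, start minute a. *)
Definition key := (nat * nat)%type.

Definition is_block (ms : seq nat) (kk : key) : Prop :=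
  let: (i, a) := kk in
  [/\ 1 <= i <= size ms, meas ms i %| a & a + meas ms i <= day_len].

Definition block_in (ms : seq nat) (kk : key) (s e : nat) : Prop :=
  let: (i, a) := kk in s <= a /\ a + meas ms i <= e.

(* Parent of a level-i block (i >= 2): the unique level-(i-1) block containing it. *)
Definition parent (ms : seq nat) (kk : key) : key :=
  let: (i, a) := kk in (i.-1, a - a %% meas ms i.-1).

Definition H (ms : seq nat) (s e : nat) (kk : key) : Prop :=
  [/\ is_block ms kk, block_in ms kk s e &
      (kk.1 = 1 \/ ~ block_in ms (parent ms kk) s e)].

Definition Q (ms : seq nat) (t : nat) (kk : key) : Prop :=
  let: (i, a) := kk in 1 <= i <= size ms /\ a = t - t %% meas ms i.

(** Every minute t has one query block per level, nested from coarse to fine,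
    and the finest one, [t, t+1), lies inside [s, e).  Take the coarsest level
    whose block around t lies inside [s, e): that block is an index key, since
    its parent is the block around t one level up, which by minimality is not
    contained in [s, e). *)

From mathcomp Require Import all_boot.

Set Implicit Arguments.
Unset Strict Implicit.
Unset Printing Implicit Defensive.

Definition align (m t : nat) : nat := t - t %% m.

Lemma alignE m t : align m t = t %/ m * m.
Proof. by rewrite /align {1}(divn_eq t m) addnK. Qed.

Lemma dvdn_align m t : m %| align m t.
Proof. by rewrite alignE dvdn_mull. Qed.

Lemma align1 t : align 1 t = t.
Proof. by rewrite /align modn1 subn0. Qed.

Lemma align_addn_le m n t : m %| n -> t < n -> align m t + m <= n.
Proof.
move=> /dvdnP[c ->] lt_tn; have m_gt0 : 0 < m by case: m lt_tn; rewrite ?muln0.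
by rewrite alignE -mulSnr leq_mul2r ltn_divLR // lt_tn orbT.
Qed.

Lemma align_align d m t : d %| m -> align m (align d t) = align m t.
Proof.
case: (posnP d) => [-> | d_gt0 /dvdnP[c ->]].
  by rewrite dvd0n => /eqP ->; rewrite /align !modn0 !subnn.
by rewrite !alignE [c * d]mulnC !divnMA mulnK.
Qed.

Section Hierarchy.

Variable ms : seq nat.
Hypothesis hms : hierarchy ms.

Lemma meas_dvd_pred i : 1 < i <= size ms -> meas ms i %| meas ms i.-1.
Proof. by case: hms => _ _ dvd _ _; apply: dvd. Qed.

Lemma meas_dvd_day i : 0 < i <= size ms -> meas ms i %| day_len.
Proof.
elim: i => [|[|i] IH] //; first by case: hms => _ _ _ _ ->.
move=> lvl; apply: dvdn_trans (@meas_dvd_pred i.+2 lvl) _; apply: IH.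
by case/andP: lvl => _ /ltnW.
Qed.

Lemma meas_finest : meas ms (size ms) = 1.
Proof. by case: hms. Qed.

Variable t : nat.
Hypothesis lt_t_day : t < day_len.

Lemma is_block_query i :
  0 < i <= size ms -> is_block ms (i, align (meas ms i) t).
Proof.
move=> lvl; split=> //; first exact: dvdn_align.
exact: align_addn_le (meas_dvd_day lvl) lt_t_day.
Qed.

Lemma parent_query i : 1 < i <= size ms ->
  parent ms (i, align (meas ms i) t) = (i.-1, align (meas ms i.-1) t).
Proof. by move=> lvl; rewrite /= -/(align _ _) align_align // meas_dvd_pred. Qed.

End Hierarchy.

Theorem theorem1 (ms : seq nat) (s e t : nat) :
  hierarchy ms -> s < e -> e <= day_len -> s <= t < e ->
  exists kk : key, Q ms t kk /\ H ms s e kk.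
Proof.
move=> hms _ le_e_day /andP[le_st lt_te].
have lt_t_day : t < day_len by apply: leq_trans le_e_day.
pose inside i := [&& 0 < i <= size ms, s <= align (meas ms i) t
                  & align (meas ms i) t + meas ms i <= e].
have finest_inside : inside (size ms).
  have [[size_gt0 _] _ _ _ _] := hms.
  by rewrite /inside (meas_finest hms) align1 addn1 size_gt0 le_st lt_te leqnn.
have [i /and3P[lvl s_le le_e] coarsest] := ex_minnP (ex_intro inside _ finest_inside).
exists (i, align (meas ms i) t); split=> //.
split=> //; first exact: is_block_query.
case: i lvl s_le le_e coarsest => [|[|i]] lvl s_le le_e coarsest //; [by left | right].
rewrite (@parent_query ms hms t i.+2) // => -[s_le' le_e'].
have /coarsest : inside i.+1.
  by case/andP: lvl => _ /ltnW lt_size; rewrite /inside s_le' le_e' lt_size.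
by rewrite ltnn.
Qed.
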